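(* For every $k\ge 0$ and every opponent agent $\mathrm{opp}$, $\mathrm{outcome}(\mathrm{CIMCIC}(k),\mathrm{opp})$ is never $(C,D)$.
   Context: An agent is a deterministic program that takes the source code of an opponent agent and outputs $C$ or $D$; $\mathrm{outcome}(A,B)=(A(\text{source of }B),B(\text{source of }A))$. Agents use a fixed sound formal proof system $S$. $\mathrm{proof\_search}(k,\mathrm{opp},\varphi)$ returns True iff some string of at most $k$ characters is a valid $S$-proof of $\varphi$. $\mathrm{CIMCIC}(k)$ (''Cooperate If My Cooperation Implies Cooperation''), on input opponent source, returns $C$ if $\mathrm{proof\_search}\big(k,\mathrm{opp},\text{``}(\mathrm{CIMCIC}(k)(\mathrm{opp}.\mathrm{source})=C)\to(\mathrm{opp}(\mathrm{CIMCIC}(k).\mathrm{source})=C)\text{''}\big)$ is True, and $D$ otherwise. *)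

From Stdlib Require Import List.
Import ListNotations.

Set Implicit Arguments.

Inductive action := C | D.

Definition source (Sigma : Type) := list Sigma.

(* Formulas of the proof system S that are needed here:
   [FOut a b x] is the sentence "program a, run on input (source) b, outputs x";
   [FImp f g] is the implication f -> g. *)
Inductive formula (Sigma : Type) :=
| FOut : source Sigma -> source Sigma -> action -> formula Sigma
| FImp : formula Sigma -> formula Sigma -> formula Sigma.

Arguments FOut {Sigma}.
Arguments FImp {Sigma}.

(* Standard semantics, relative to the (deterministic, total) execution
   function [run]: [run a b] is the output of program [a] on input [b]. *)
Fixpoint holds (Sigma : Type) (run : source Sigma -> source Sigma -> action)
    (f : formula Sigma) : Prop :=
  match f with
  | FOut a b x => run a b = x
  | FImp f1 f2 => holds run f1 -> holds run f2
  end.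

Definition sound (Sigma : Type) (run : source Sigma -> source Sigma -> action)
    (prf : list Sigma -> formula Sigma -> bool) : Prop :=
  forall p phi, prf p phi = true -> holds run phi.

Definition proof_search (Sigma : Type) (prf : list Sigma -> formula Sigma -> bool)
    (k : nat) (phi : formula Sigma) : Prop :=
  exists p, length p <= k /\ prf p phi = true.

Definition outcome (Sigma : Type) (run : source Sigma -> source Sigma -> action)
    (a b : source Sigma) : action * action := (run a b, run b a).

Definition cimcic_formula (Sigma : Type) (me opp : source Sigma) : formula Sigma :=
  FImp (FOut me opp C) (FOut opp me C).

(* [me] is (the source code of) CIMCIC(k): on every input [opp] it returns C
   iff proof_search(k, "(CIMCIC(k)(opp)=C) -> (opp(CIMCIC(k))=C)") succeeds,
   and D otherwise (actions are two-valued). *)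
Definition is_CIMCIC (Sigma : Type) (run : source Sigma -> source Sigma -> action)
    (prf : list Sigma -> formula Sigma -> bool) (k : nat) (me : source Sigma) : Prop :=
  forall opp : source Sigma,
    run me opp = C <-> proof_search prf k (cimcic_formula me opp).


Set Implicit Arguments.
Unset Strict Implicit.

Lemma proof_search_sound (Sigma : Type)
    (run : source Sigma -> source Sigma -> action)
    (prf : list Sigma -> formula Sigma -> bool) (k : nat) (phi : formula Sigma) :
  sound run prf -> proof_search prf k phi -> holds run phi.
Proof.
  intros HS [p [_ Hp]].
  exact (HS p phi Hp).
Qed.

Lemma CIMCIC_cooperation_reciprocated (Sigma : Type)
    (run : source Sigma -> source Sigma -> action)
    (prf : list Sigma -> formula Sigma -> bool) (k : nat) (me opp : source Sigma) :
  sound run prf -> is_CIMCIC run prf k me ->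
  run me opp = C -> run opp me = C.
Proof.
  intros HS Hme Hcoop.
  apply (proof_search_sound HS (proj1 (Hme opp) Hcoop)).
  exact Hcoop.
Qed.

Theorem proposition3 (Sigma : Type)
    (run : source Sigma -> source Sigma -> action)
    (prf : list Sigma -> formula Sigma -> bool)
    (HS : sound run prf)
    (k : nat) (cimcic : source Sigma) (Hcimcic : is_CIMCIC run prf k cimcic)
    (opp : source Sigma) :
  outcome run cimcic opp <> (C, D).
Proof.
  unfold outcome; intro Hout.
  injection Hout as Hcoop Hdefect.
  rewrite (CIMCIC_cooperation_reciprocated HS Hcimcic Hcoop) in Hdefect.
  discriminate.
Qed.
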